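(* Let $A\in\mathbb R^{n\times n}$ be Hurwitz and consider a subsystem whose measurement output is its full state, $y=x$, with $G_{yu}(s)=(sI-A)^{-1}B$ and $G_{yv}(s)=(sI-A)^{-1}L$ (state equation $\dot x=Ax+Bu+Lv$), and with all blocks of the subsystem in $\mathcal{RH}_\infty$. Let $P,\overline P,P^\dagger,\overline P^\dagger$ satisfy $PP^\dagger=I$, $\overline P\,\overline P^\dagger=I$, (C1) $P^\dagger P+\overline P^\dagger\overline P=I_n$, (C2) $PAP^\dagger$ and $\overline PA\overline P^\dagger$ Hurwitz, (C3) $PL=0$ and $\overline PL$ nonsingular, and let $X(s):=P-(sI-PAP^\dagger)^{-1}PA\overline P^\dagger\overline P$. Then a controller $u=Kx$ is an output-rectifying retrofit controller if and only if $K=\hat KX$, where $\hat K$ is a stabilizing controller for $\hat G_{\xi u}(s):=(sI-PAP^\dagger)^{-1}PB$.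
   Context: $\mathcal{RH}_\infty$ denotes the set of stable, proper, real rational transfer matrices; a square real matrix is Hurwitz if all eigenvalues have negative real part. For a subsystem with interaction input $v$, control input $u$ and measurement output $y$, a controller $u=Ky$ is an output-rectifying retrofit controller if $K=(I+QG_{yu})^{-1}Q$ for some $Q\in\mathcal{RH}_\infty$ with $Q\,G_{yv}=0$. For transfer matrices $H$ and $C$, $C$ is a stabilizing controller for $H$ if the positive feedback loop $y=Hu$, $u=Cy$ is internally stable. *)

From HB Require Import structures.
From mathcomp Require Import all_boot all_order all_algebra.
Set Implicit Arguments. Unset Strict Implicit. Unset Printing Implicit Defensive.
Import Order.TTheory GRing.Theory Num.Theory.
Local Open Scope ring_scope.

(* C : numClosedFieldType plays the role of the complex numbers;
   "real" means Num.real elements of C.  Transfer matrices are matrices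
   over the field of rational functions F = {fraction {poly C}}. *)

Definition rfun (C : numClosedFieldType) := {fraction {poly C}}.

Definition cst (C : numClosedFieldType) (c : C) : rfun C :=
  FracField.tofrac (c%:P).
Definition svar (C : numClosedFieldType) : rfun C := FracField.tofrac 'X.

Definition cst_mx (C : numClosedFieldType) m n (A : 'M[C]_(m, n)) : 'M[rfun C]_(m, n) :=
  map_mx (@cst C) A.

Definition resolvent (C : numClosedFieldType) n (A : 'M[C]_n) : 'M[rfun C]_n :=
  invmx ((svar C)%:M - cst_mx A).

Definition real_poly (C : numClosedFieldType) (p : {poly C}) : Prop :=
  forall i, p`_i \is Num.real.

Definition real_mx (C : numClosedFieldType) m n (A : 'M[C]_(m, n)) : Prop :=
  forall i j, A i j \is Num.real.

Definition RHinf (C : numClosedFieldType) (f : rfun C) : Prop :=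
  exists p q : {poly C},
    [/\ q != 0, f = FracField.tofrac p / FracField.tofrac q,
        (size p <= size q)%N, real_poly p /\ real_poly q &
        forall z : C, root q z -> 'Re z < 0].

Definition RHinf_mx (C : numClosedFieldType) m n (M : 'M[rfun C]_(m, n)) : Prop :=
  forall i j, RHinf (M i j).

Definition hurwitz (C : numClosedFieldType) n (A : 'M[C]_n) : Prop :=
  forall z : C, eigenvalue A z -> 'Re z < 0.

(* C is a stabilizing controller for H: the positive feedback loop
   y = H u + d1, u = Cc y + d2 is well-posed and all closed-loop maps
   (d1,d2) -> (y,u) are in RH_infinity. *)
Definition stabilizing (C : numClosedFieldType) p m
  (H : 'M[rfun C]_(p, m)) (Cc : 'M[rfun C]_(m, p)) : Prop :=
  let M : 'M[rfun C]_(p + m) := block_mx 1%:M (- H) (- Cc) 1%:M in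
  M \in unitmx /\ RHinf_mx (invmx M).

Definition ORRC (C : numClosedFieldType) ny nu nv
  (Gyu : 'M[rfun C]_(ny, nu)) (Gyv : 'M[rfun C]_(ny, nv))
  (K : 'M[rfun C]_(nu, ny)) : Prop :=
  exists Q : 'M[rfun C]_(nu, ny),
    [/\ RHinf_mx Q, Q *m Gyv = 0, (1%:M + Q *m Gyu) \in unitmx &
        K = invmx (1%:M + Q *m Gyu) *m Q].

From HB Require Import structures.
From mathcomp Require Import all_boot all_order all_algebra.
From mathcomp Require Import zify.
Import Order.TTheory GRing.Theory Num.Theory.
Local Open Scope ring_scope.

(* The proof has three independent ingredients.
   1. RH-infinity is a subring of the rational functions containing the real
      constants, hence RH-infinity matrices are closed under sums, products
      and block assembly; moreover the resolvent (sI - A)^{-1} of a real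
      Hurwitz matrix is in RH-infinity (Cramer's rule: entries are
      adjugate entries of degree < n over the characteristic polynomial).
   2. Youla-type parametrisation: for H in RH-infinity, Khat stabilises H iff
      Khat = (I + Qhat H)^{-1} Qhat for some Qhat in RH-infinity with
      I + Qhat H invertible; the closed-loop inverse is written explicitly.
   3. Geometry of the rectifier X: X Gyu = Ghat, X Gyv = 0, and every Q with
      Q Gyv = 0 factors as Q = (Q Pd) X.
   The theorem follows: ORRCs (I + Q Gyu)^{-1} Q correspond via Q = Qhat X
   to the parametrisation of stabilising controllers of Ghat. *)

Section RHinfRing.
Context {C : numClosedFieldType}.
Local Notation F := (rfun C).
Implicit Types p q : {poly C}.
Implicit Types f g : F.

Lemma real_polyD p q : real_poly p -> real_poly q -> real_poly (p + q).
Proof. by move=> hp hq i; rewrite coefD rpredD. Qed.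

Lemma real_polyN p : real_poly p -> real_poly (- p).
Proof. by move=> hp i; rewrite coefN rpredN. Qed.

Lemma real_polyM p q : real_poly p -> real_poly q -> real_poly (p * q).
Proof. by move=> hp hq i; rewrite coefM rpred_sum // => j _; rewrite rpredM. Qed.

Lemma real_polyC (c : C) : c \is Num.real -> real_poly c%:P.
Proof. by move=> hc i; rewrite coefC; case: eqP => // _; apply: real0. Qed.

Lemma real_poly1 : real_poly (1 : {poly C}).
Proof. by rewrite -polyC1; apply/real_polyC/real1. Qed.

Lemma real_polyXMn k : real_poly ('X *+ k : {poly C}).
Proof. by move=> i; rewrite coefMn coefX rpredMn ?realn. Qed.

Lemma real_poly_sign k : real_poly ((-1) ^+ k : {poly C}).
Proof.
elim: k => [|k IH]; first exact: real_poly1.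
by rewrite exprS; apply: real_polyM => //; apply/real_polyN/real_poly1.
Qed.

Lemma RHinf_cst (c : C) : c \is Num.real -> RHinf (cst c).
Proof.
move=> hc; exists c%:P, 1; split; first exact: oner_neq0.
- by rewrite tofrac1 invr1 mulr1.
- by rewrite size_poly1 size_polyC_leq1.
- by split; [apply: real_polyC | apply: real_poly1].
- by move=> z; rewrite (negbTE (root1 z)).
Qed.

Lemma RHinf0 : RHinf (0 : F).
Proof. by have := @RHinf_cst 0 (real0 C); rewrite /cst tofrac0. Qed.

Lemma RHinf1 : RHinf (1 : F).
Proof. by have := @RHinf_cst 1 (real1 C); rewrite /cst tofrac1. Qed.

Lemma RHinfD f g : RHinf f -> RHinf g -> RHinf (f + g).
Proof.
move=> [p1 [q1 [nq1 -> s1 [r1 r1'] h1]]] [p2 [q2 [nq2 -> s2 [r2 r2'] h2]]].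
exists (p1 * q2 + p2 * q1), (q1 * q2); split.
- by rewrite mulf_neq0.
- by rewrite addf_div ?tofrac_eq0 // tofracD !tofracM.
- rewrite size_mul //; apply: leq_trans (size_polyD _ _) _.
  rewrite geq_max; apply/andP; split; apply: leq_trans (size_polyMleq _ _) _;
  rewrite -!subn1 leq_sub2r //; [by rewrite leq_add2r | by rewrite addnC leq_add2l].
- by split; [apply: real_polyD; apply: real_polyM | apply: real_polyM].
- by move=> z; rewrite rootM => /orP [/h1|/h2].
Qed.

Lemma RHinfN f : RHinf f -> RHinf (- f).
Proof.
move=> [p1 [q1 [nq1 -> s1 [r1 r1'] h1]]]; exists (- p1), q1; split => //.
- by rewrite tofracN mulNr.
- by rewrite size_polyN.
- by split => //; apply: real_polyN.
Qed.

Lemma RHinfM f g : RHinf f -> RHinf g -> RHinf (f * g).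
Proof.
move=> [p1 [q1 [nq1 -> s1 [r1 r1'] h1]]] [p2 [q2 [nq2 -> s2 [r2 r2'] h2]]].
exists (p1 * p2), (q1 * q2); split.
- by rewrite mulf_neq0.
- by rewrite mulf_div !tofracM.
- rewrite (size_mul nq1 nq2); apply: leq_trans (size_polyMleq _ _) _.
  by rewrite -!subn1 leq_sub2r // leq_add.
- by split; apply: real_polyM.
- by move=> z; rewrite rootM => /orP [/h1|/h2].
Qed.

End RHinfRing.

Section RHinfMatrices.
Context {C : numClosedFieldType}.
Local Notation F := (rfun C).

Lemma RHinf_mxM m n p (M : 'M[F]_(m, n)) (N : 'M[F]_(n, p)) :
  RHinf_mx M -> RHinf_mx N -> RHinf_mx (M *m N).
Proof.
move=> hM hN i j; rewrite mxE.
by apply: big_ind => [|f g|k _]; [apply: RHinf0 | apply: RHinfD | apply: RHinfM].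
Qed.

Lemma RHinf_mxD m n (M N : 'M[F]_(m, n)) :
  RHinf_mx M -> RHinf_mx N -> RHinf_mx (M + N).
Proof. by move=> hM hN i j; rewrite mxE; apply: RHinfD. Qed.

Lemma RHinf_mxN m n (M : 'M[F]_(m, n)) : RHinf_mx M -> RHinf_mx (- M).
Proof. by move=> hM i j; rewrite mxE; apply: RHinfN. Qed.

Lemma RHinf_mx_cst m n (M : 'M[C]_(m, n)) : real_mx M -> RHinf_mx (cst_mx M).
Proof. by move=> hM i j; rewrite mxE; apply: RHinf_cst. Qed.

Lemma RHinf_mx1 n : RHinf_mx (1%:M : 'M[F]_n).
Proof. by move=> i j; rewrite mxE; case: (i == j); [apply: RHinf1 | apply: RHinf0]. Qed.

Lemma RHinf_mx_block m1 m2 n1 n2 (A : 'M[F]_(m1, n1)) (B : 'M[F]_(m1, n2))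
  (Cc : 'M[F]_(m2, n1)) (D : 'M[F]_(m2, n2)) :
  RHinf_mx A -> RHinf_mx B -> RHinf_mx Cc -> RHinf_mx D ->
  RHinf_mx (block_mx A B Cc D).
Proof.
move=> hA hB hC hD i j; rewrite -(splitK i) -(splitK j).
case: (split i) => a; case: (split j) => b.
- by rewrite block_mxEul.
- by rewrite block_mxEur.
- by rewrite block_mxEdl.
- by rewrite block_mxEdr.
Qed.

Lemma real_mxM m n p (M : 'M[C]_(m, n)) (N : 'M[C]_(n, p)) :
  real_mx M -> real_mx N -> real_mx (M *m N).
Proof. by move=> hM hN i j; rewrite mxE rpred_sum // => k _; rewrite rpredM. Qed.

End RHinfMatrices.

Section Resolvent.
Context {C : numClosedFieldType}.
Local Notation tf := (@FracField.tofrac {poly C}).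

Lemma cst_mxE m n (M : 'M[C]_(m, n)) : cst_mx M = map_mx tf (map_mx polyC M).
Proof. by apply/matrixP => i j; rewrite !mxE. Qed.

Lemma cst_mxM m n p (M : 'M[C]_(m, n)) (N : 'M[C]_(n, p)) :
  cst_mx (M *m N) = cst_mx M *m cst_mx N.
Proof. by rewrite !cst_mxE !map_mxM. Qed.

Lemma cst_mxB m n (M N : 'M[C]_(m, n)) : cst_mx (M - N) = cst_mx M - cst_mx N.
Proof. by rewrite !cst_mxE !map_mxB. Qed.

Lemma cst_mxD m n (M N : 'M[C]_(m, n)) : cst_mx (M + N) = cst_mx M + cst_mx N.
Proof. by rewrite !cst_mxE !map_mxD. Qed.

Lemma cst_mx0 m n : cst_mx (0 : 'M[C]_(m, n)) = 0.
Proof. by rewrite cst_mxE !map_mx0. Qed.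

Lemma cst_mx1 n : cst_mx (1%:M : 'M[C]_n) = 1%:M.
Proof. by rewrite cst_mxE !map_mx1. Qed.

Lemma sI_sub_char_poly_mx k (A : 'M[C]_k) :
  (svar C)%:M - cst_mx A = map_mx tf (char_poly_mx A).
Proof. by apply/matrixP => i j; rewrite !mxE rmorphB rmorphMn. Qed.

Lemma sI_sub_unit {k} (A : 'M[C]_k) : (svar C)%:M - cst_mx A \in unitmx.
Proof.
rewrite sI_sub_char_poly_mx unitmxE det_map_mx unitfE tofrac_eq0.
exact/monic_neq0/char_poly_monic.
Qed.

Lemma size_det_le k (M : 'M[{poly C}]_k) :
  (forall i j, size (M i j) <= 2)%N -> (size (\det M) <= k.+1)%N.
Proof.
move=> hM; apply: leq_trans (size_sum _ _ _) _; apply/bigmax_leqP => s _.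
rewrite size_Msign; apply: (@leq_trans (\sum_(i < k) 1)%N.+1).
  2: by rewrite sum1_card card_ord.
apply: (big_ind2 (fun (p : {poly C}) (d : nat) => (size p <= d.+1)%N)) => //.
- by rewrite size_poly1.
- move=> p1 d1 p2 d2 h1 h2; apply: leq_trans (size_polyMleq _ _) _; lia.
Qed.

Lemma real_poly_det k (M : 'M[{poly C}]_k) :
  (forall i j, real_poly (M i j)) -> real_poly (\det M).
Proof.
move=> hM; apply: (big_ind (@real_poly C)) => [|p q|s _].
- by rewrite -polyC0; apply/real_polyC/real0.
- exact: real_polyD.
apply/real_polyM/(big_ind (@real_poly C)); first exact: real_poly_sign.
- exact: real_poly1.
- exact: real_polyM.
- by move=> i _; apply: hM.
Qed.

Lemma char_poly_mx_entry {k} (A : 'M[C]_k) i j :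
  real_mx A -> (size (char_poly_mx A i j) <= 2)%N /\ real_poly (char_poly_mx A i j).
Proof.
move=> hA; rewrite !mxE; split.
- apply: leq_trans (size_polyD _ _) _; rewrite geq_max size_polyN.
  rewrite (leq_trans (size_polyC_leq1 _)) // andbT.
  by case: (i == j); rewrite ?size_polyX ?size_poly0.
- by apply/real_polyD/real_polyN/real_polyC; [apply: real_polyXMn | apply: hA].
Qed.

(* Cramer's rule: (sI - A)^{-1} = adj(sI - A) / chi_A with deg adj < deg chi_A,
   so the resolvent of a real Hurwitz matrix is in RH-infinity. *)
Lemma RHinf_resolvent k (A : 'M[C]_k) :
  real_mx A -> hurwitz A -> RHinf_mx (resolvent A).
Proof.
move=> hA hurA i j.
have u := sI_sub_unit A; rewrite sI_sub_char_poly_mx in u.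
rewrite /resolvent sI_sub_char_poly_mx /invmx u -map_mx_adj det_map_mx !mxE mulrC.
have minor a b := char_poly_mx_entry A (lift j a) (lift i b) hA.
exists (\adj (char_poly_mx A) i j), (char_poly A); split.
- exact/monic_neq0/char_poly_monic.
- by rewrite [in RHS]mxE.
- rewrite size_char_poly !mxE /cofactor size_Msign.
  apply: (@leq_trans k.-1.+1); last lia.
  by apply: size_det_le => a b; have [+ _] := minor a b; rewrite !mxE.
- split; last by apply: real_poly_det => a b; case: (char_poly_mx_entry A a b hA).
  rewrite !mxE /cofactor; apply: real_polyM; first exact: real_poly_sign.
  by apply: real_poly_det => a b; have [_] := minor a b; rewrite !mxE.
- by move=> z hz; apply: hurA; rewrite eigenvalue_root_char.
Qed.

End Resolvent.

Section YoulaParametrisation.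
Context {C : numClosedFieldType} {p m : nat} {H : 'M[rfun C]_(p, m)}.
Local Notation F := (rfun C).

Local Notation loop Kc := (block_mx 1%:M (- H) (- Kc) 1%:M).

(* For Khat = (I + Qhat H)^{-1} Qhat the closed-loop matrix has an inverse
   that is polynomial in H and Qhat (no inversion of I + Qhat H needed). *)
Lemma loop_inverse (Qh : 'M[F]_(m, p)) :
  let U := 1%:M + Qh *m H in U \in unitmx ->
  loop (invmx U *m Qh) *m block_mx (1%:M + H *m Qh) (H + H *m Qh *m H) Qh U
  = 1%:M.
Proof.
move=> U hU; rewrite mulmx_block (scalar_mx_block p m 1).
have QhU : Qh *m (1%:M + H *m Qh) = U *m Qh.
  by rewrite mulmxDr mulmx1 mulmxDl mul1mx mulmxA.
have QhUH : Qh *m (H + H *m Qh *m H) = U *m (Qh *m H).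
  by rewrite mulmxDr mulmxDl mul1mx !mulmxA.
congr block_mx.
- by rewrite mul1mx mulNmx addrK.
- by rewrite mul1mx mulNmx mulmxDr mulmx1 mulmxA subrr.
- by rewrite mulNmx mul1mx -mulmxA QhU (mulKmx hU) addNr.
- rewrite mulNmx mul1mx -[invmx U *m Qh *m _]mulmxA QhUH (mulKmx hU).
  by rewrite /U addrC addrK.
Qed.

Lemma stabilizing_of_param (Qh : 'M[F]_(m, p)) :
  RHinf_mx H -> RHinf_mx Qh -> 1%:M + Qh *m H \in unitmx ->
  stabilizing H (invmx (1%:M + Qh *m H) *m Qh).
Proof.
move=> hH hQh hU; have MN := loop_inverse Qh hU.
have [Mu _] := mulmx1_unit MN; split => //.
rewrite -[invmx _]mulmx1 -MN mulmxA (mulVmx Mu) mul1mx.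
have hHQh : RHinf_mx (H *m Qh) by apply: RHinf_mxM.
have hQhH : RHinf_mx (Qh *m H) by apply: RHinf_mxM.
have hHQhH : RHinf_mx (H *m Qh *m H) by apply: RHinf_mxM.
by apply: RHinf_mx_block => //; apply: RHinf_mxD => //; apply: RHinf_mx1.
Qed.

(* Conversely, the lower-left block Qhat of the closed-loop inverse of a
   stabilising Khat is in RH-infinity and recovers Khat. *)
Lemma param_of_stabilizing (Kh : 'M[F]_(m, p)) :
  stabilizing H Kh ->
  exists Qh : 'M[F]_(m, p), [/\ RHinf_mx Qh, 1%:M + Qh *m H \in unitmx &
                               Kh = invmx (1%:M + Qh *m H) *m Qh].
Proof.
case=> Mu hN; have NM := mulVmx Mu; move: hN NM; set N := invmx _ => hN.
rewrite -(submxK N) mulmx_block (scalar_mx_block p m 1).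
case/eq_block_mx => _ _ N3E N4E.
have {}N3E : dlsubmx N = drsubmx N *m Kh.
  by apply/eqP; rewrite -subr_eq0 -N3E mulmx1 mulmxN.
have {}N4E : drsubmx N = 1%:M + dlsubmx N *m H.
  by rewrite -N4E mulmxN mulmx1 [- _ + _]addrC subrK.
have N4u : drsubmx N \in unitmx.
  apply: (proj1 (mulmx1_unit (B := 1%:M - Kh *m H) _)).
  by rewrite mulmxBr mulmx1 mulmxA -N3E {1}N4E addrK.
exists (dlsubmx N); split.
- by move=> i j; rewrite !mxE; apply: hN.
- by rewrite -N4E.
- by rewrite -N4E N3E mulmxA (mulVmx N4u) mul1mx.
Qed.

End YoulaParametrisation.

Section RectifierGeometry.
Context {C : numClosedFieldType} {n m q r : nat}.
Context {A : 'M[C]_n} {B : 'M[C]_(n, m)} {L : 'M[C]_(n, q)}.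
Context {P : 'M[C]_(r, n)} {Pd : 'M[C]_(n, r)} {Pb : 'M[C]_(q, n)} {Pbd : 'M[C]_(n, q)}.
Local Notation F := (rfun C).
Hypothesis decomp : Pd *m P + Pbd *m Pb = 1%:M.
Hypothesis PL0 : P *m L = 0.
Hypothesis PbL_unit : Pb *m L \in unitmx.

Local Notation sI M := ((svar C)%:M - cst_mx M).
Local Notation Ah := (P *m A *m Pd).
Local Notation X :=
  (cst_mx P - resolvent (P *m A *m Pd) *m cst_mx (P *m A *m Pbd *m Pb)).

Lemma sI_intertwine_P :
  sI Ah *m cst_mx P = cst_mx P *m sI A + cst_mx (P *m A *m Pbd *m Pb).
Proof.
have AhP : Ah *m P = P *m A - P *m A *m Pbd *m Pb.
  by rewrite -{2}(mulmx1 (P *m A)) -decomp mulmxDr !mulmxA addrK.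
rewrite mulmxBl mulmxBr mul_scalar_mx mul_mx_scalar -!cst_mxM AhP cst_mxB.
by rewrite opprD opprK addrA.
Qed.

Lemma sI_intertwine_Pd :
  cst_mx Pd *m sI Ah = sI A *m cst_mx Pd + cst_mx (Pbd *m Pb *m A *m Pd).
Proof.
have PdAh : Pd *m Ah = A *m Pd - Pbd *m Pb *m A *m Pd.
  have PdP : Pd *m P = 1%:M - Pbd *m Pb by rewrite -decomp addrK.
  by rewrite !mulmxA PdP !mulmxBl mul1mx.
rewrite mulmxBl mulmxBr mul_scalar_mx mul_mx_scalar -!cst_mxM PdAh cst_mxB.
by rewrite opprD opprK addrA.
Qed.

(* X = (sI - Ahat)^{-1} P (sI - A), hence X (sI - A)^{-1} = (sI - Ahat)^{-1} P. *)
Lemma rectifier_resolvent : X *m resolvent A = resolvent Ah *m cst_mx P.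
Proof.
have -> : X = resolvent Ah *m (cst_mx P *m sI A).
  rewrite -[cst_mx P *m sI A](addrK (cst_mx (P *m A *m Pbd *m Pb))).
  by rewrite -sI_intertwine_P mulmxBr mulmxA (mulVmx (sI_sub_unit _)) mul1mx.
by rewrite /resolvent -!mulmxA (mulmxV (sI_sub_unit _)) mulmx1.
Qed.

Lemma rectifier_Gyu :
  X *m (resolvent A *m cst_mx B) = resolvent Ah *m cst_mx (P *m B).
Proof. by rewrite mulmxA rectifier_resolvent -mulmxA -cst_mxM. Qed.

Lemma rectifier_Gyv : X *m (resolvent A *m cst_mx L) = 0.
Proof. by rewrite mulmxA rectifier_resolvent -mulmxA -cst_mxM PL0 cst_mx0 mulmx0. Qed.

Lemma rectifier_factor {k} {Q : 'M[F]_(k, n)} :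
  Q *m (resolvent A *m cst_mx L) = 0 -> Q = (Q *m cst_mx Pd) *m X.
Proof.
move=> hQL; set R := resolvent A.
have uA := sI_sub_unit A; have uAh := sI_sub_unit Ah.
have Pbd_L : Pbd = L *m invmx (Pb *m L).
  have LE : L = Pbd *m (Pb *m L).
    by rewrite mulmxA -[L in LHS]mul1mx -decomp mulmxDl -mulmxA PL0 mulmx0 add0r.
  by rewrite {1}LE -mulmxA (mulmxV PbL_unit) mulmx1.
have QRPbd : Q *m R *m cst_mx Pbd = 0.
  by rewrite Pbd_L cst_mxM mulmxA -(mulmxA Q) hQL mul0mx.
have QR_P : Q *m R = Q *m R *m cst_mx Pd *m cst_mx P.
  rewrite -{1}[Q *m R]mulmx1 -cst_mx1 -decomp cst_mxD mulmxDr !cst_mxM.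
  by rewrite !mulmxA QRPbd mul0mx addr0.
have QRPd : Q *m R *m cst_mx Pd = Q *m cst_mx Pd *m resolvent Ah.
  suff <- : Q *m R *m cst_mx Pd *m sI Ah = Q *m cst_mx Pd by rewrite mulmxK.
  rewrite -mulmxA sI_intertwine_Pd mulmxDr mulmxA -(mulmxA Q) /R (mulVmx uA).
  by rewrite mulmx1 !cst_mxM !mulmxA QRPbd !mul0mx addr0.
have XsI : resolvent Ah *m cst_mx P *m sI A = X.
  by rewrite -rectifier_resolvent -mulmxA (mulVmx uA) mulmx1.
by rewrite -[Q in LHS](mulmxKV uA) -/(resolvent A) -/R QR_P QRPd -XsI !mulmxA.
Qed.

End RectifierGeometry.

Theorem proposition6 (C : numClosedFieldType) (n m q r : nat)
  (A : 'M[C]_n) (B : 'M[C]_(n, m)) (L : 'M[C]_(n, q))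
  (P : 'M[C]_(r, n)) (Pd : 'M[C]_(n, r))
  (Pb : 'M[C]_(q, n)) (Pbd : 'M[C]_(n, q)) :
  real_mx A -> real_mx B -> real_mx L ->
  real_mx P -> real_mx Pd -> real_mx Pb -> real_mx Pbd ->
  hurwitz A ->
  RHinf_mx (resolvent A *m cst_mx B) ->
  RHinf_mx (resolvent A *m cst_mx L) ->
  P *m Pd = 1%:M ->
  Pb *m Pbd = 1%:M ->
  Pd *m P + Pbd *m Pb = 1%:M ->
  hurwitz (P *m A *m Pd) ->
  hurwitz (Pb *m A *m Pbd) ->
  P *m L = 0 ->
  Pb *m L \in unitmx ->
  let X := cst_mx P
           - resolvent (P *m A *m Pd) *m cst_mx (P *m A *m Pbd *m Pb) in
  let Ghat := resolvent (P *m A *m Pd) *m cst_mx (P *m B) in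
  forall K : 'M[rfun C]_(m, n),
    ORRC (resolvent A *m cst_mx B) (resolvent A *m cst_mx L) K <->
    exists Khat : 'M[rfun C]_(m, r), stabilizing Ghat Khat /\ K = Khat *m X.
Proof.
move=> hA hB _ hP hPd hPb hPbd _ _ _ _ _ decomp hurAh _ PL PbLu X Ghat K.
have hRh : RHinf_mx (resolvent (P *m A *m Pd)).
  by apply: RHinf_resolvent => //; do 2!apply: real_mxM => //.
have hX : RHinf_mx X.
  apply/RHinf_mxD/RHinf_mxN/RHinf_mxM/RHinf_mx_cst => //; first exact: RHinf_mx_cst.
  by do 3!apply: real_mxM => //.
have hG : RHinf_mx Ghat by apply/RHinf_mxM/RHinf_mx_cst/real_mxM.
have XGyu : X *m (resolvent A *m cst_mx B) = Ghat := rectifier_Gyu decomp.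
have XGyv : X *m (resolvent A *m cst_mx L) = 0 := rectifier_Gyv decomp PL.
split.
- case=> Q [hQ hQL hU ->].
  have QE := rectifier_factor decomp PL PbLu hQL; set Qh := Q *m cst_mx Pd in QE.
  have QGyu : Q *m (resolvent A *m cst_mx B) = Qh *m Ghat by rewrite QE -mulmxA XGyu.
  exists (invmx (1%:M + Qh *m Ghat) *m Qh); split; last by rewrite QGyu {1}QE mulmxA.
  apply: stabilizing_of_param; rewrite -?QGyu //.
  exact/RHinf_mxM/RHinf_mx_cst.
- case=> Kh [/param_of_stabilizing [Qh [hQh hU ->]] ->].
  exists (Qh *m X); rewrite -!mulmxA XGyu; split => //.
  + exact: RHinf_mxM.
  + by rewrite XGyv mulmx0.
Qed.
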